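(* Assume $\gamma^{(l)}_i>0$ for all $l,i$. Fix $m\ge1$, a neuron $j$ of layer $m$, a label $q$, and set $u=s^{(m)}_{j,q}$. Then for every $0\le l\le m$, neuron $i$ of layer $l$, and $p,k\in\{+,-\}$: (1) $\dfrac{\partial a^{(m,p\oplus q)}_{\mathrm{stop},j}}{\partial a^{(l,k)}_{\mathrm{stop},i}}=\Gamma_u(s^{(l)}_{i,p\oplus k})$, where the derivative is taken of the affine map sending the layer-$l$ pair $(a^{(l,+)}_{\mathrm{stop}},a^{(l,-)}_{\mathrm{stop}})$ (treated as free variables) to the layer-$m$ pair via the Stopping Decomposition recursion with all gate factors $\mathbf 1[z^{(l')}_{h}>0]$, $l<l'\le m$, frozen at their values at $x$; (2) $J_{ji}=\xi_{q,+}\bigl(\Gamma_u(s^{(l)}_{i,+})-\Gamma_u(s^{(l)}_{i,-})\bigr)$, where $J=D^{(m)}W^{(m)}D^{(m-1)}W^{(m-1)}\cdots D^{(l+1)}W^{(l+1)}$ (identity if $l=m$) with $D^{(l')}=\mathrm{diag}(\mathbf 1[z^{(l')}>0])$, i.e. $J_{ji}=\partial a^{(m)}_j/\partial a^{(l)}_i$ with the convention $\mathrm{ReLU}'(0)=0$.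
   Context: ReLU network: $a^{(0)}=x$, $z^{(l)}=b^{(l)}+W^{(l)}a^{(l-1)}$, $a^{(l)}=\mathrm{ReLU}(z^{(l)})$; $W^{(l,\pm)}=(W^{(l)})^\pm$, $b^{(l,\pm)}=(b^{(l)})^\pm$ entrywise, $u^\pm=\max(\pm u,0)$. Stopping Decomposition: $a^{(0,\pm)}_{\mathrm{stop},k}=x^\pm_k$, $z^{(l,+)}_i=b^{(l,+)}_i+\sum_hW^{(l,+)}_{ih}a^{(l-1,+)}_{\mathrm{stop},h}+\sum_hW^{(l,-)}_{ih}a^{(l-1,-)}_{\mathrm{stop},h}$, $z^{(l,-)}_i=b^{(l,-)}_i+\sum_hW^{(l,+)}_{ih}a^{(l-1,-)}_{\mathrm{stop},h}+\sum_hW^{(l,-)}_{ih}a^{(l-1,+)}_{\mathrm{stop},h}$, $a^{(l,\pm)}_{\mathrm{stop},i}=\mathbf 1[z^{(l)}_i>0]\,z^{(l,\pm)}_i$. Labels $p,q,r,k\in\{+,-\}$; $p\oplus q=+$ if $p=q$, else $-$; $\xi_{p,q}=1$ if $p=q$, else $-1$. Stopping-Game chain: states $s^{(l)}_{i,r}$ ($0\le l\le L$) plus a cemetery $\perp$. From $s^{(l)}_{i,r}$ with $l\ge1$: if $z^{(l)}_i\le0$ go to $\perp$ (discount factor irrelevant); if $z^{(l)}_i>0$ go to $s^{(l-1)}_{h,r'}$ with probability $W^{(l,r\oplus r')}_{ih}/\gamma^{(l)}_i$, where $\gamma^{(l)}_i=\sum_h|W^{(l)}_{ih}|$, with discount factor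 $\gamma^{(l)}_i$. States at layer $0$ and $\perp$ are absorbing/terminal. For a trajectory $\tau=(\tau_0=u,\tau_1,\dots)$ define the cumulative discount $d_0=1$, $d_t=\prod_{m'<t}\gamma(\tau_{m'})$ where $\gamma(\tau_{m'})$ is the discount factor of the continuation taken at $\tau_{m'}$. The discounted occupation measure is $\Gamma_u(v)=\mathbb{E}[\sum_t d_t\mathbf 1\{\tau_t=v\}]$. *)

From HB Require Import structures.
From mathcomp Require Import all_boot all_order all_algebra.
From mathcomp Require Import all_classical all_reals all_analysis.
Set Implicit Arguments. Unset Strict Implicit. Unset Printing Implicit Defensive.
Import Order.TTheory GRing.Theory Num.Theory.
Import numFieldNormedType.Exports.
Local Open Scope ring_scope.

(* Conventions:
   - layers 0..L, width of layer l is [n l]; neurons of layer l are the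
     naturals i < n l (entries outside these ranges are never used);
   - [W l i h] = W^{(l)}_{ih} (l >= 1, i < n l, h < n (l-1)), [b l i] = b^{(l)}_i,
     [x k] = x_k (k < n 0);
   - labels p,q,r,k in {+,-} are booleans, [true] = +, [false] = -. *)

Definition relu {R : realType} (u : R) : R := Num.max u 0.
Definition ppart {R : realType} (u : R) : R := Num.max u 0.
Definition npart {R : realType} (u : R) : R := Num.max (- u) 0.
Definition sgpart {R : realType} (r : bool) (u : R) : R :=
  if r then ppart u else npart u.

Definition oplus (p q : bool) : bool := p == q.
Definition xi {R : realType} (p q : bool) : R := if p == q then 1 else -1.

Section ReLUNet.
Variable R : realType.
Variable L : nat.
Variable n : nat -> nat.
Variable W : nat -> nat -> nat -> R.
Variable b : nat -> nat -> R.
Variable x : nat -> R.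

Fixpoint act (l : nat) : nat -> R :=
  match l with
  | 0 => x
  | l'.+1 => fun i => relu (b l'.+1 i + \sum_(h < n l') W l'.+1 i h * act l' h)
  end.

Definition preact (l i : nat) : R :=
  b l i + \sum_(h < n l.-1) W l i h * act l.-1 h.

Definition gate (l i : nat) : R := if 0 < preact l i then 1 else 0.

Definition gam (l i : nat) : R := \sum_(h < n l.-1) `|W l i h|.

(* One step of the Stopping Decomposition at layer l (gate frozen at its
   value at x), applied to a layer-(l-1) pair A (A true = a^+, A false = a^-). *)
Definition stop_step (l : nat) (A : bool -> nat -> R) : bool -> nat -> R :=
  fun r i => gate l i *
    (sgpart r (b l i)
     + \sum_(h < n l.-1) sgpart true (W l i h) * A r h
     + \sum_(h < n l.-1) sgpart false (W l i h) * A (~~ r) h).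

Fixpoint stop_from (l : nat) (A : bool -> nat -> R) (m : nat) : bool -> nat -> R :=
  match m with
  | 0 => A
  | m'.+1 => if (m'.+1 <= l)%N then A else stop_step m'.+1 (stop_from l A m')
  end.

Definition a_stop (l : nat) : bool -> nat -> R :=
  stop_from 0 (fun r k => sgpart r (x k)) l.

Definition shift_pair (A : bool -> nat -> R) (k : bool) (i : nat) (t : R) :
    bool -> nat -> R :=
  fun r h => if (r == k) && (h == i) then A r h + t else A r h.

Fixpoint jac (l m : nat) : nat -> nat -> R :=
  match m with
  | 0 => fun j i => (j == i)%:R
  | m'.+1 => if (m'.+1 <= l)%N then fun j i => (j == i)%:R
             else fun j i => gate m'.+1 j * \sum_(h < n m') W m'.+1 j h * jac l m' h i
  end.

(* Stopping-game chain. States: Some (l, i, r) = s^{(l)}_{i,r}; None = cemetery. *)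
Definition state := option (nat * nat * bool).

Definition states : seq state :=
  None :: flatten [seq flatten [seq [:: Some (l, i, true); Some (l, i, false)]
                               | i <- iota 0 (n l)]
                  | l <- iota 0 L.+1].

Definition trans (s s' : state) : R :=
  match s with
  | None => 0
  | Some (l, i, r) =>
      if l is 0 then 0 else
      if 0 < preact l i then
        match s' with
        | None => 0
        | Some (l', h, r') =>
            if (l' == l.-1) && (h < n l.-1)%N
            then sgpart (oplus r r') (W l i h) / gam l i else 0
        end
      else (if s' is None then 1 else 0)
  end.

(* discount factor of the continuation taken at s (only relevant when a
   transition with positive probability is taken from s) *)
Definition disc (s : state) : R :=
  match s with
  | Some (l, i, _) => if 0 < preact l i then gam l i else 1
  | None => 1
  end.

(* E_s[ d_t 1{tau_t = v} ]  (sum over all trajectories of length t from s) *)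
Fixpoint occ_t (t : nat) (s v : state) : R :=
  match t with
  | 0 => (s == v)%:R
  | t'.+1 => \sum_(s' <- states) trans s s' * disc s * occ_t t' s' v
  end.

Definition Gamma (u v : state) : R := limn (fun N => \sum_(t < N) occ_t t u v).

End ReLUNet.

From HB Require Import structures.
From mathcomp Require Import all_boot all_order all_algebra.
From mathcomp Require Import all_classical all_reals all_analysis.
From mathcomp Require Import ring lra zify.
Set Implicit Arguments. Unset Strict Implicit. Unset Printing Implicit Defensive.
Import Order.TTheory GRing.Theory Num.Theory.
Import numFieldNormedType.Exports.
Local Open Scope ring_scope.

(* Every transition of the stopping game descends exactly one layer, so
   Gamma_u(s^{(l)}_{i,c}) is the single occupation term at time m - l, and it
   obeys the one-layer recursion
     Gamma(s^{(m+1)}_{j,q}) = 1[z^{(m+1)}_j > 0] * sum_h (W^+_{jh} Gamma(s^{(m)}_{h,q})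
                                                  + W^-_{jh} Gamma(s^{(m)}_{h,-q})),
   the discount gamma cancelling the normalisation of the transition
   probabilities. The Stopping Decomposition is affine in the layer-l pair, and
   its slope in a^{(l,k)}_i satisfies the same recursion with the same initial
   values; the Jacobian entries satisfy it after taking the difference of the
   two signs, because W = W^+ - W^-. *)

Lemma is_derive_affine (R : numFieldType) (t0 c d : R) :
  is_derive t0 1 (fun t : R => c + t * d) d.
Proof.
have := is_deriveD (is_derive_cst c t0 1) (is_deriveZ d (is_derive_id t0 1)).
rewrite add0r [_ *: _]mulr1.
by congr is_derive; apply/funext => t /=; rewrite mulrC.
Qed.

Lemma sumr_affine (R : comNzRingType) (I : Type) (r : seq I) (P : pred I)
    (a f g : I -> R) (t : R) :
  \sum_(h <- r | P h) a h * (f h + t * g h)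
  = \sum_(h <- r | P h) a h * f h + t * \sum_(h <- r | P h) a h * g h.
Proof. by rewrite mulr_sumr -big_split; apply: eq_bigr => h _; rewrite mulrDr mulrCA. Qed.

Lemma sgpartB {R : realType} (u : R) : sgpart true u - sgpart false u = u.
Proof. by rewrite /sgpart /ppart /npart /Num.max; case: ifP; case: ifP; lra. Qed.

Lemma negb_oplus p q : ~~ oplus p q = oplus p (~~ q).
Proof. by case: p; case: q. Qed.

Lemma xiN {R : realType} q : - xi q true = xi (~~ q) true :> R.
Proof. by case: q; rewrite /xi /= ?opprK. Qed.

Section StoppingGame.
Variables (R : realType) (L : nat) (n : nat -> nat).
Variables (W : nat -> nat -> nat -> R) (b : nat -> nat -> R) (x : nat -> R).

Local Notation gate := (gate n W b x).
Local Notation occ := (occ_t L n W b x).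
Local Notation Gam := (Gamma L n W b x).
Local Notation stop_from := (stop_from n W b x).
Local Notation jac := (jac n W b x).

Lemma sum_states_layer (l : nat) (f : state -> R) : (l <= L)%N ->
  f None = 0 -> (forall l' h r, l' != l -> f (Some (l', h, r)) = 0) ->
  \sum_(s <- states L n) f s
  = \sum_(h < n l) (f (Some (l, val h, true)) + f (Some (l, val h, false))).
Proof.
move=> hl fNone f_off.
rewrite /states big_cons fNone add0r big_flatten big_map.
rewrite (bigD1_seq l) ?mem_iota ?iota_uniq //= [X in _ + X]big1 ?addr0; last first.
  move=> l' hl'; rewrite big_flatten big_map big1 // => h _.
  by rewrite !big_cons big_nil !f_off // !Monoid.simpm.
rewrite big_flatten big_map.
have -> : iota 0 (n l) = index_iota 0 (n l) by rewrite /index_iota subn0.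
rewrite big_mkord.
by apply: eq_bigr => h _; rewrite !big_cons big_nil Monoid.simpm.
Qed.

Lemma occ_t_cemetery t v : v != None -> occ t None v = 0.
Proof.
case: t => [|t] hv /=; first by rewrite eq_sym (negbTE hv).
by rewrite big1 // => s _; rewrite /trans !mul0r.
Qed.

Lemma occ_t_off_layer t l' j q l i c : (t + l != l')%N ->
  occ t (Some (l', j, q)) (Some (l, i, c)) = 0.
Proof.
elim: t l' j q => [|t IH] l' j q /= hl'.
  by case: eqP => // -[hl _ _]; rewrite hl add0n eqxx in hl'.
apply: big1 => s _; case: l' hl' => [|l'] hl'; rewrite /trans; first by rewrite !mul0r.
case: ifP => _; case: s => [[[l2 h] r]|]; rewrite ?mul0r //.
  by case: andP => [[/eqP -> _]|_]; rewrite ?mul0r // IH ?mulr0 // -addSnnS.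
by rewrite occ_t_cemetery ?mulr0.
Qed.

Lemma Gamma_occ_t m j q l i c : (l <= m)%N ->
  Gam (Some (m, j, q)) (Some (l, i, c)) = occ (m - l) (Some (m, j, q)) (Some (l, i, c)).
Proof.
move=> hlm; apply: lim_near_cst => //; exists (m - l).+1 => // N /= hN.
rewrite (bigD1 (Ordinal hN)) //= big1 ?addr0 // => t ht.
apply: occ_t_off_layer; apply: contra ht => /eqP ht.
by apply/eqP; apply: val_inj => /=; lia.
Qed.

Hypothesis gam_gt0 :
  forall l i : nat, (1 <= l <= L)%N -> (i < n l)%N -> 0 < gam n W l i.

Lemma occ_t_succ t l j q v : (l < L)%N -> (j < n l.+1)%N -> v != None ->
  occ t.+1 (Some (l.+1, j, q)) v = gate l.+1 j * \sum_(h < n l)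
    (sgpart true (W l.+1 j h) * occ t (Some (l, val h, q)) v
     + sgpart false (W l.+1 j h) * occ t (Some (l, val h, ~~ q)) v).
Proof.
move=> hlL hj hv; have gam_neq0 : gam n W l.+1 j != 0 by rewrite gt_eqF ?gam_gt0.
rewrite /= /gate; case: ifP => hz; last first.
  rewrite mul0r /states big_cons occ_t_cemetery // mulr0 add0r big1 //.
  by case=> [[[l2 h] r]|] _; rewrite ?mul0r ?occ_t_cemetery ?mulr0.
rewrite mul1r (@sum_states_layer l) ?(ltnW hlL) //; first last.
- by move=> l' h r /negbTE hl'; rewrite hl' !mul0r.
- by rewrite !mul0r.
apply: eq_bigr => h _; rewrite eqxx ltn_ord /= !divfK //.
by case: q; rewrite //= addrC.
Qed.

Lemma Gamma_diag l j q i c :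
  Gam (Some (l, j, q)) (Some (l, i, c)) = ((j == i) && (q == c))%:R.
Proof.
rewrite Gamma_occ_t // subnn /=.
by rewrite (_ : (Some _ == Some _) = ((l, j, q) == (l, i, c))) // !xpair_eqE eqxx.
Qed.

Lemma Gamma_succ m j q l i c : (l <= m)%N -> (m < L)%N -> (j < n m.+1)%N ->
  Gam (Some (m.+1, j, q)) (Some (l, i, c)) = gate m.+1 j * \sum_(h < n m)
    (sgpart true (W m.+1 j h) * Gam (Some (m, val h, q)) (Some (l, i, c))
     + sgpart false (W m.+1 j h) * Gam (Some (m, val h, ~~ q)) (Some (l, i, c))).
Proof.
move=> hlm hmL hj; rewrite !Gamma_occ_t ?(leqW hlm) // subSn // occ_t_succ //.
by congr (_ * _); apply: eq_bigr => h _; rewrite !Gamma_occ_t.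
Qed.

Lemma stop_from_le l A m : (m <= l)%N -> stop_from l A m = A.
Proof. by case: m => //= m ->. Qed.

Lemma stop_from_succ l A m : (l <= m)%N ->
  stop_from l A m.+1 = stop_step n W b x m.+1 (stop_from l A m).
Proof. by move=> hlm /=; rewrite ifN // -ltnNge ltnS. Qed.

Lemma jac_le l m j i : (m <= l)%N -> jac l m j i = (j == i)%:R.
Proof. by case: m => //= m ->. Qed.

Lemma jac_succ l m j i : (l <= m)%N ->
  jac l m.+1 j i = gate m.+1 j * \sum_(h < n m) W m.+1 j h * jac l m h i.
Proof. by move=> hlm /=; rewrite ifN // -ltnNge ltnS. Qed.

Lemma stop_from_shift_pair l A k i t d : (l + d <= L)%N ->
  forall j p q, (j < n (l + d))%N ->
  stop_from l (shift_pair A k i t) (l + d) (oplus p q) j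
  = stop_from l A (l + d) (oplus p q) j
    + t * Gam (Some ((l + d)%N, j, q)) (Some (l, i, oplus p k)).
Proof.
elim: d => [|d IH] hdL j p q hj.
  rewrite addn0 !stop_from_le // Gamma_diag /shift_pair.
  by case: (j == i); case: p; case: q; case: k; rewrite /= ?mulr1 ?mulr0 ?addr0.
rewrite addnS in hdL hj *.
have IH' (h : 'I_(n (l + d))) p' q' := IH (ltnW hdL) h p' q' (ltn_ord h).
rewrite !stop_from_succ ?leq_addr // /stop_step Gamma_succ ?leq_addr //= negb_oplus.
under eq_bigr => h _ do rewrite IH'.
under [X in _ * (_ + X) = _]eq_bigr => h _ do rewrite IH'.
by rewrite !sumr_affine big_split /=; ring.
Qed.

Lemma jac_Gamma l i d : (l + d <= L)%N -> forall j q, (j < n (l + d))%N ->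
  jac l (l + d) j i = xi q true * (Gam (Some ((l + d)%N, j, q)) (Some (l, i, true))
                                   - Gam (Some ((l + d)%N, j, q)) (Some (l, i, false))).
Proof.
elim: d => [|d IH] hdL j q hj.
  rewrite addn0 jac_le // !Gamma_diag.
  by case: (j == i); case: q; rewrite /xi /=; ring.
rewrite addnS in hdL hj *.
have IH' (h : 'I_(n (l + d))) q' := IH (ltnW hdL) h q' (ltn_ord h).
rewrite jac_succ ?leq_addr // !Gamma_succ ?leq_addr // -mulrBr -sumrB mulrCA.
rewrite [in RHS]mulr_sumr.
congr (_ * _); apply: eq_bigr => h _.
rewrite -[in LHS](sgpartB (W _ j h)) mulrBl {1}(IH' h q) (IH' h (~~ q)) -xiN.
by ring.
Qed.

End StoppingGame.

Theorem mainTheorem6 (R : realType) (L : nat) (n : nat -> nat)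
  (W : nat -> nat -> nat -> R) (b : nat -> nat -> R) (x : nat -> R)
  (hgam : forall l i : nat, (1 <= l <= L)%N -> (i < n l)%N -> 0 < gam n W l i)
  (m j : nat) (q : bool) (hm : (1 <= m <= L)%N) (hj : (j < n m)%N) :
  let u : state := Some (m, j, q) in
  forall (l i : nat) (p k : bool), (l <= m)%N -> (i < n l)%N ->
    is_derive (0 : R) (1 : R)
      (fun t : R =>
         stop_from n W b x l (shift_pair (a_stop n W b x l) k i t) m (oplus p q) j)
      (Gamma L n W b x u (Some (l, i, oplus p k)))
    /\
    jac n W b x l m j i
      = xi q true * (Gamma L n W b x u (Some (l, i, true))
                     - Gamma L n W b x u (Some (l, i, false))).
Proof.
move=> u l i p k hlm _; rewrite {}/u.
have /andP [_ hmL] := hm; rewrite -(subnKC hlm) in hj hmL *.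
move: (m - l)%N hj hmL => d hj hmL.
split; last exact: jac_Gamma.
under eq_fun => t do rewrite (stop_from_shift_pair b x hgam) //.
exact: is_derive_affine.
Qed.
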